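(* (1) For every $\varepsilon\ge 0$, the optimal partition selection primitive for $(\varepsilon,0)$-differential privacy is $\pi_{\mathrm{opt}}(n)=0$ for all $n\in\mathbb{N}$. (2) For every $\delta\in[0,1]$, the optimal partition selection primitive for $(0,\delta)$-differential privacy is $\pi_{\mathrm{opt}}(n)=\min(1,n\delta)$ for all $n\in\mathbb{N}$.
   Context: $\mathbb{N}=\{0,1,2,\dots\}$. A partition selection primitive is a function $\pi:\mathbb{N}\to[0,1]$ with $\pi(0)=0$; it is interpreted as: count the number $n$ of users in a partition and release (keep) the partition with probability $\pi(n)$, drop it otherwise. Let $\rho_\pi(n)$ be the random variable in $\{\mathrm{drop},\mathrm{keep}\}$ equal to keep with probability $\pi(n)$ and drop with probability $1-\pi(n)$. The primitive $\pi$ is $(\varepsilon,\delta)$-differentially private if for all $n,n'\in\mathbb{N}$ with $|n-n'|=1$ and all $S\subseteq\{\mathrm{drop},\mathrm{keep}\}$, $\Pr[\rho_\pi(n)\in S]\le e^{\varepsilon}\Pr[\rho_\pi(n')\in S]+\delta$. A primitive $\pi_{\mathrm{opt}}$ is optimal for $(\varepsilon,\delta)$-DP if it is $(\varepsilon,\delta)$-differentially private and for every $(\varepsilon,\delta)$-differentially private partition selection primitive $\pi$ and every $n\in\mathbb{N}$, $\pi(n)\le\pi_{\mathrm{opt}}(n)$. *)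

From Stdlib Require Import Reals Lra Lia.
Open Scope R_scope.

Inductive outcome : Type := drop | keep.

Definition is_primitive (pi : nat -> R) : Prop :=
  pi 0%nat = 0 /\ forall n, 0 <= pi n <= 1.

Definition prob_outcome (pi : nat -> R) (n : nat) (o : outcome) : R :=
  match o with keep => pi n | drop => 1 - pi n end.

Definition prob_in (pi : nat -> R) (n : nat) (S : outcome -> bool) : R :=
  (if S drop then prob_outcome pi n drop else 0)
  + (if S keep then prob_outcome pi n keep else 0).

Definition is_dp (eps delta : R) (pi : nat -> R) : Prop :=
  is_primitive pi /\
  forall (n n' : nat) (S : outcome -> bool),
    (n = Datatypes.S n' \/ n' = Datatypes.S n) ->
    prob_in pi n S <= exp eps * prob_in pi n' S + delta.

Definition is_optimal (eps delta : R) (pi_opt : nat -> R) : Prop :=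
  is_dp eps delta pi_opt /\
  forall pi : nat -> R, is_dp eps delta pi -> forall n : nat, pi n <= pi_opt n.

(* Only the singleton event {keep} matters for optimality: (eps, delta)-DP
   forces pi (n+1) <= e^eps pi n + delta, and iterating from pi 0 = 0 bounds
   pi n by 0 when delta = 0 and by n delta when eps = 0.  Conversely the two
   candidate primitives satisfy the keep and drop inequalities between
   neighbours, which is all DP asks for on a two-point outcome space. *)

From Stdlib Require Import Reals Lra.
Open Scope R_scope.

Definition keep_event (o : outcome) : bool :=
  match o with keep => true | drop => false end.

Lemma prob_in_keep_event (pi : nat -> R) (n : nat) :
  prob_in pi n keep_event = pi n.
Proof. unfold prob_in; simpl; ring. Qed.

Lemma is_dp_keep_succ (eps delta : R) (pi : nat -> R) (n : nat) :
  is_dp eps delta pi -> pi (S n) <= exp eps * pi n + delta.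
Proof.
  intros [_ Hdp].
  rewrite <- !(prob_in_keep_event pi).
  exact (Hdp (S n) n keep_event (or_introl eq_refl)).
Qed.

Fixpoint keep_prob_bound (eps delta : R) (n : nat) : R :=
  match n with
  | O => 0
  | S k => exp eps * keep_prob_bound eps delta k + delta
  end.

Lemma is_dp_le_keep_prob_bound (eps delta : R) (pi : nat -> R) (n : nat) :
  is_dp eps delta pi -> pi n <= keep_prob_bound eps delta n.
Proof.
  intros Hdp; induction n as [|n IH]; simpl.
  - destruct Hdp as [[Hpi0 _] _]; lra.
  - pose proof (is_dp_keep_succ eps delta pi n Hdp) as Hstep.
    pose proof (exp_pos eps) as Hexp.
    nra.
Qed.

Lemma keep_prob_bound_delta0 (eps : R) (n : nat) : keep_prob_bound eps 0 n = 0.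
Proof. induction n as [|n IH]; simpl; [|rewrite IH]; ring. Qed.

Lemma keep_prob_bound_eps0 (delta : R) (n : nat) :
  keep_prob_bound 0 delta n = INR n * delta.
Proof.
  induction n as [|n IH]; simpl keep_prob_bound.
  - simpl; ring.
  - rewrite IH, exp_0, S_INR; ring.
Qed.

Lemma is_dp_intro (eps delta : R) (pi : nat -> R) :
  0 <= eps -> 0 <= delta -> is_primitive pi ->
  (forall n n' : nat, (n = S n' \/ n' = S n) ->
     pi n <= exp eps * pi n' + delta /\
     1 - pi n <= exp eps * (1 - pi n') + delta) ->
  is_dp eps delta pi.
Proof.
  intros Heps Hdelta Hpi Hadj; split; [exact Hpi|].
  intros n n' S Hnn'.
  destruct (Hadj n n' Hnn') as [Hkeep Hdrop].
  pose proof (exp_ineq1_le eps) as Hexp.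
  destruct Hpi as [_ Hrange]; pose proof (Hrange n); pose proof (Hrange n').
  unfold prob_in, prob_outcome.
  destruct (S drop), (S keep); nra.
Qed.

Lemma Rmin_add_le (c x h : R) : 0 <= h -> Rmin c (x + h) <= Rmin c x + h.
Proof. intros Hh; unfold Rmin; destruct (Rle_dec c (x + h)), (Rle_dec c x); lra. Qed.

Lemma is_primitive_Rmin_linear (delta : R) :
  0 <= delta -> is_primitive (fun n => Rmin 1 (INR n * delta)).
Proof.
  intros Hdelta; split.
  - simpl; rewrite Rmult_0_l; unfold Rmin; destruct (Rle_dec 1 0); lra.
  - intros n.
    assert (0 <= INR n * delta) by (apply Rmult_le_pos; [apply pos_INR | lra]).
    unfold Rmin; destruct (Rle_dec 1 (INR n * delta)); lra.
Qed.

Lemma Rmin_linear_succ (delta : R) (k : nat) : 0 <= delta ->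
  Rmin 1 (INR k * delta) <= Rmin 1 (INR (S k) * delta) <=
  Rmin 1 (INR k * delta) + delta.
Proof.
  intros Hdelta; rewrite S_INR, Rmult_plus_distr_r, Rmult_1_l; split.
  - apply Rle_min_compat_l; lra.
  - exact (Rmin_add_le 1 (INR k * delta) delta Hdelta).
Qed.

Theorem theorem2 :
  (forall eps : R, 0 <= eps -> is_optimal eps 0 (fun _ : nat => 0)) /\
  (forall delta : R, 0 <= delta <= 1 ->
     is_optimal 0 delta (fun n : nat => Rmin 1 (INR n * delta))).
Proof.
  split.
  - intros eps Heps; split.
    + apply is_dp_intro; try lra.
      * split; [reflexivity | intros; lra].
      * intros n n' _; pose proof (exp_ineq1_le eps); split; lra.
    + intros pi Hpi n.
      rewrite <- (keep_prob_bound_delta0 eps n).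
      exact (is_dp_le_keep_prob_bound eps 0 pi n Hpi).
  - intros delta Hdelta; split.
    + apply is_dp_intro; try lra.
      * apply is_primitive_Rmin_linear; lra.
      * intros n n' Hnn'; rewrite exp_0.
        destruct Hnn' as [-> | ->];
          [ pose proof (Rmin_linear_succ delta n') | pose proof (Rmin_linear_succ delta n) ];
          lra.
    + intros pi Hpi n; apply Rmin_glb.
      * destruct Hpi as [[_ Hrange] _]; apply Hrange.
      * rewrite <- keep_prob_bound_eps0.
        exact (is_dp_le_keep_prob_bound 0 delta pi n Hpi).
Qed.
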